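(* Let $A\in M_n(\mathbb{C})$ and suppose the Schur map $S_A\colon M_n(\mathbb{C})\to M_n(\mathbb{C})$, $S_A(B)=A\circ B$, is nonzero and multiplicative. Then the following are equivalent: (i) $S_A$ is $*$-preserving, i.e. $S_A(B^* )=S_A(B)^*$ for all $B$; (ii) $\|A\|=n$; (iii) $\frac{1}{n}A$ is an orthogonal projection; (iv) the operator norm of $S_A$ is $1$.
   Context: $A\circ B=(a_{ij}b_{ij})$ is the entrywise (Schur) product; multiplicative means $S_A(BC)=S_A(B)S_A(C)$ for all $B,C$. $\|A\|$ is the operator norm of $A$ on $\mathbb{C}^n$, and the norm of $S_A$ is its operator norm when $M_n(\mathbb{C})$ carries the operator norm on domain and range. *)

From HB Require Import structures.
From mathcomp Require Import all_boot all_order all_algebra.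
From mathcomp Require Import complex.
From mathcomp Require Import boolp classical_sets reals.
Set Implicit Arguments. Unset Strict Implicit. Unset Printing Implicit Defensive.
Import Order.TTheory GRing.Theory Num.Theory.
Local Open Scope ring_scope.
Local Open Scope classical_set_scope.

Section Defs.
Variable R : realType.
Variable n : nat.

Definition schur (A B : 'M[R[i]]_n) : 'M[R[i]]_n := \matrix_(i, j) (A i j * B i j).

Definition adjmx (B : 'M[R[i]]_n) : 'M[R[i]]_n := map_mx (@conjc R) B^T.

Definition vnorm (x : 'cV[R[i]]_n) : R :=
  Num.sqrt (\sum_k ((complex.Re (x k 0)) ^+ 2 + (complex.Im (x k 0)) ^+ 2)).

Definition opnorm (M : 'M[R[i]]_n) : R :=
  sup [set vnorm (M *m x) | x in [set x : 'cV[R[i]]_n | vnorm x <= 1]].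

Definition schur_opnorm (A : 'M[R[i]]_n) : R :=
  sup [set opnorm (schur A B) | B in [set B : 'M[R[i]]_n | opnorm B <= 1]].

Definition orth_proj (P : 'M[R[i]]_n) : Prop := P *m P = P /\ adjmx P = P.

End Defs.

From HB Require Import structures.
From mathcomp Require Import all_boot all_order all_algebra.
From mathcomp Require Import complex.
From mathcomp Require Import boolp classical_sets reals.
From mathcomp Require Import ring lra.
Import Order.TTheory GRing.Theory Num.Theory.
Local Open Scope ring_scope.

(* Multiplicativity of S_A on matrix units gives A i k = A i j * A j k, and
   nonvanishing gives A i i = 1; so A i j * A j i = 1, A is the rank-one matrix
   A i j = A i 0 * A 0 j, and A *m A = n *: A.  Each of (i)-(iv) is then
   equivalent to |A i j| = 1 for all i, j:
   - (i) and (iii) say that A is self-adjoint, i.e. conj (A i j) = (A i j)^-1;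
   - the operator norm of the rank-one A is its Frobenius norm, which is at
     least n since |A i j|^2 + |A j i|^2 >= 2, with equality iff every |A i j| = 1;
   - for unimodular A, S_A B = D B D^* with D = diag (A i 0) unitary, so S_A is
     isometric; conversely ||S_A|| = 1 bounds |A i j| = ||S_A (delta_mx i j)||
     by 1, and |A i j| |A j i| = 1 forces equality. *)


Section RealInequalities.
Context {R : realFieldType}.

Lemma sqr_sum_le (n : nat) (a : 'I_n -> R) :
  (\sum_j a j) ^+ 2 <= n%:R * \sum_j a j ^+ 2.
Proof.
elim: n a => [|n IH] a; first by rewrite !big_ord0 expr0n mul0r.
rewrite !big_ord_recr /= -natr1.
set S := \sum_(j < n) _; set Q := \sum_(j < n) _; set x := a ord_max.
have IHa : S ^+ 2 <= n%:R * Q := IH _.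
have Q_ge0 : 0 <= Q by rewrite sumr_ge0 // => j _; rewrite sqr_ge0.
have [n0|n_gt0] := posnP n.
  move: IHa; rewrite n0 mul0r => S2_le0.
  have -> : S = 0 by apply/eqP; rewrite -sqrf_eq0 eq_le S2_le0 sqr_ge0.
  by rewrite !add0r mul1r; lra.
(* n ((n + 1) (Q + x^2) - (S + x)^2) = (S - n x)^2 + (n + 1) (n Q - S^2) *)
have : 0 <= (S - n%:R * x) ^+ 2 := sqr_ge0 _.
have : (0 : R) < n%:R by rewrite ltr0n.
nra.
Qed.

Lemma add_ge2_of_mul_eq1 (t s : R) : 0 <= t -> t * s = 1 -> 2 <= t + s.
Proof.
move=> t_ge0 ts1; have t_gt0 : 0 < t.
  rewrite lt_neqAle t_ge0 andbT; apply/eqP => t0.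
  by move: ts1; rewrite -t0 mul0r => /eqP; rewrite eq_sym oner_eq0.
have := sqr_ge0 (t - 1); nra.
Qed.

Lemma eq1_of_mul_eq1_add_eq2 (t s : R) : t * s = 1 -> t + s = 2 -> t = 1.
Proof.
move=> ts1 ts2; apply/eqP; rewrite -subr_eq0 -sqrf_eq0.
have -> : (t - 1) ^+ 2 = t * (t + s - 2) - (t * s - 1) by ring.
by rewrite ts1 ts2 !subrr mulr0 subr0.
Qed.

Lemma eq_of_sum_le_card_mul {I : finType} {f : I -> R} {c : R} :
  (forall i, c <= f i) -> \sum_i f i <= #|I|%:R * c -> forall i, f i = c.
Proof.
move=> f_ge sum_le i; apply/eqP; rewrite -subr_eq0; apply/eqP.
have sub_ge0 j : 0 <= f j - c by rewrite subr_ge0.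
have sum_sub0 : \sum_j (f j - c) = 0.
  apply/eqP; rewrite eq_le (sumr_ge0 _ (fun j _ => sub_ge0 j)) andbT.
  by rewrite sumrB sumr_const -mulr_natl subr_le0.
exact: (psumr_eq0P (fun j _ => sub_ge0 j) sum_sub0).
Qed.

End RealInequalities.

Lemma sqrt_le_natr (R : rcfType) (x : R) (k : nat) :
  (Num.sqrt x <= k%:R) = (x <= k%:R ^+ 2).
Proof. by rewrite -[in LHS](ger0_norm (ler0n R k)) -sqrtr_sqr ler_sqrt ?sqr_ge0. Qed.

Lemma sup_eq_of_ubound (R : realType) (S : set R) x :
  S x -> ubound S x -> sup S = x.
Proof.
move=> Sx ubx; apply/le_anti/andP; split; first by apply: ge_sup => //; exists x.
by apply: ub_le_sup => //; exists x.
Qed.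

(* [sup] of a set without supremum is [0], so a nonzero [sup] certifies boundedness. *)
Lemma le_sup_of_neq0 (R : realType) (S : set R) x :
  sup S != 0 -> S x -> x <= sup S.
Proof.
move=> supS_neq0 Sx; apply: sup_upper_bound => //.
by apply/not_notP => noSup; rewrite (sup_out noSup) eqxx in supS_neq0.
Qed.

Section SquaredModulus.
Context {R : realType}.
Implicit Types (x y : R[i]) (c : R).

Definition sqnormc x : R := complex.Re x ^+ 2 + complex.Im x ^+ 2.

Lemma sqnormcM x y : sqnormc (x * y) = sqnormc x * sqnormc y.
Proof. by case: x y => a b [c d]; rewrite /sqnormc /=; ring. Qed.

Lemma sqnormcJ x : sqnormc (conjc x) = sqnormc x.
Proof. by case: x => a b; rewrite /sqnormc /=; ring. Qed.

Lemma mulcJ_sqnormc x : x * conjc x = (sqnormc x)%:C%C.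
Proof.
case: x => a b; apply/eqP; rewrite eq_complex /sqnormc /=.
by apply/andP; split; apply/eqP; ring.
Qed.

Lemma sqnormc_ge0 x : 0 <= sqnormc x.
Proof. by rewrite addr_ge0 ?sqr_ge0. Qed.

Lemma sqnormc_real c : sqnormc c%:C%C = c ^+ 2.
Proof. by rewrite /sqnormc /= expr0n addr0. Qed.

Lemma sqnormc0 : sqnormc 0 = 0.
Proof. by rewrite (sqnormc_real 0) expr0n. Qed.

Lemma sqnormc1 : sqnormc 1 = 1.
Proof. by rewrite (sqnormc_real 1) expr1n. Qed.

Lemma sqnormc_sum_le (n : nat) (f : 'I_n -> R[i]) :
  sqnormc (\sum_j f j) <= n%:R * \sum_j sqnormc (f j).
Proof.
have ReS : complex.Re (\sum_j f j) = \sum_j complex.Re (f j).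
  by apply: (big_morph (@complex.Re R)) => // -[? ?] [? ?].
have ImS : complex.Im (\sum_j f j) = \sum_j complex.Im (f j).
  by apply: (big_morph (@complex.Im R)) => // -[? ?] [? ?].
by rewrite /sqnormc ReS ImS big_split mulrDr /= lerD ?sqr_sum_le.
Qed.

End SquaredModulus.

Definition unimodular_mx {R : realType} {n : nat} (M : 'M[R[i]]_n) : Prop :=
  forall i j, sqnormc (M i j) = 1.

Definition sqfrobenius {R : realType} {n : nat} (M : 'M[R[i]]_n) : R :=
  \sum_i \sum_j sqnormc (M i j).

Section OperatorNorm.
Context {R : realType} {n : nat}.
Implicit Types (x y : 'cV[R[i]]_n) (B M : 'M[R[i]]_n).

Definition sqvnorm x : R := \sum_k sqnormc (x k 0).

Lemma vnormE x : vnorm x = Num.sqrt (sqvnorm x).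
Proof. by []. Qed.

Lemma vnorm_le1 x : (vnorm x <= 1) = (sqvnorm x <= 1).
Proof. by rewrite vnormE -{1}sqrtr1 ler_sqrt. Qed.

Lemma sqnormc_le_sqvnorm x j : sqnormc (x j 0) <= sqvnorm x.
Proof.
by rewrite /sqvnorm (bigD1 j) //= lerDl sumr_ge0 // => k _; rewrite sqnormc_ge0.
Qed.

Lemma sqvnorm_delta j : sqvnorm (delta_mx j 0) = 1.
Proof.
rewrite /sqvnorm (bigD1 j) //= big1 => [|k /negPf kj]; last by rewrite mxE kj sqnormc0.
by rewrite mxE !eqxx sqnormc1 addr0.
Qed.

Lemma opnorm_attained M K x :
  (forall y, sqvnorm y <= 1 -> vnorm (M *m y) <= K) ->
  sqvnorm x <= 1 -> vnorm (M *m x) = K -> opnorm M = K.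
Proof.
move=> Mle x_le1 MxK; apply: sup_eq_of_ubound.
  by exists x => //=; rewrite vnorm_le1.
by move=> _ [y /= y_le1 <-]; apply: Mle; rewrite -vnorm_le1.
Qed.

Lemma vnorm_mul_le_opnorm M x :
  opnorm M != 0 -> sqvnorm x <= 1 -> vnorm (M *m x) <= opnorm M.
Proof.
by move=> M_neq0 x_le1; apply: le_sup_of_neq0 => //; exists x => //=; rewrite vnorm_le1.
Qed.

Lemma opnorm_scale_delta (c : R[i]) (i j : 'I_n) :
  opnorm (c *: delta_mx i j) = Num.sqrt (sqnormc c).
Proof.
have entryE y k : (c *: delta_mx i j *m y) k 0 = (k == i)%:R * (c * y j 0).
  rewrite -scalemxAl !mxE (bigD1 j) //= big1 => [|l /negPf lj]; last first.
    by rewrite mxE lj andbF mul0r.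
  by rewrite mxE eqxx andbT addr0 mulrCA.
have sqvnormE y : sqvnorm (c *: delta_mx i j *m y) = sqnormc c * sqnormc (y j 0).
  rewrite /sqvnorm (bigD1 i) //= big1 => [|k /negPf ki]; last first.
    by rewrite entryE ki mul0r sqnormc0.
  by rewrite entryE eqxx mul1r addr0 sqnormcM.
apply: (opnorm_attained _ _ (delta_mx j 0)).
- move=> y y_le1; rewrite vnormE sqvnormE ler_sqrt ?sqnormc_ge0 //.
  by rewrite ler_piMr ?sqnormc_ge0 // (le_trans (sqnormc_le_sqvnorm y j)).
- by rewrite sqvnorm_delta.
- by rewrite vnormE sqvnormE mxE !eqxx sqnormc1 mulr1.
Qed.

Lemma sqvnorm_diag_unimodular (u : 'rV[R[i]]_n) x :
  (forall i, sqnormc (u 0 i) = 1) -> sqvnorm (diag_mx u *m x) = sqvnorm x.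
Proof.
move=> u1; rewrite /sqvnorm mul_diag_mx; apply: eq_bigr => k _.
by rewrite mxE sqnormcM u1 mul1r.
Qed.

Lemma opnorm_mulmx_isometry (U V W B : 'M[R[i]]_n) :
  (forall x, sqvnorm (U *m x) = sqvnorm x) ->
  (forall x, sqvnorm (V *m x) = sqvnorm x) -> V *m W = 1%:M ->
  opnorm (U *m B *m V) = opnorm B.
Proof.
move=> isoU isoV VW; have isoW x : sqvnorm (W *m x) = sqvnorm x.
  by rewrite -isoV mulmxA VW mul1mx.
rewrite /opnorm; congr sup; apply/seteqP; split => _ [x /= x_le1 <-].
  exists (V *m x); first by rewrite /= vnorm_le1 isoV -vnorm_le1.
  by rewrite !vnormE -!mulmxA isoU.
exists (W *m x); first by rewrite /= vnorm_le1 isoW -vnorm_le1.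
by rewrite !vnormE -!mulmxA (mulmxA V) VW mul1mx isoU.
Qed.

End OperatorNorm.

Section SchurMultiplier.
Context {R : realType} {n : nat}.
Implicit Types (A B P : 'M[R[i]]_n) (i j k : 'I_n).

Lemma schur_delta A i j : schur A (delta_mx i j) = A i j *: delta_mx i j.
Proof.
apply/matrixP => k l; rewrite !mxE.
by case: eqP => [->|]; case: eqP => [->|] //= _; rewrite ?mulr0 ?mulr1.
Qed.

Lemma schur_adjmxP A :
  (forall B, schur A (adjmx B) = adjmx (schur A B)) <-> adjmx A = A.
Proof.
split => [schurJ | adjA B]; apply/matrixP => i j.
  move/matrixP: (schurJ (delta_mx j i)) => /(_ i j).
  by rewrite !mxE !eqxx conjc1 !mulr1.
by rewrite -{1}adjA !mxE rmorphM.
Qed.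

Lemma schur_mul_transitive A :
  (forall B C, schur A (B *m C) = schur A B *m schur A C) ->
  forall i j k, A i k = A i j * A j k.
Proof.
move=> schurM i j k; move/matrixP: (schurM (delta_mx i j) (delta_mx j k)) => /(_ i k).
rewrite mul_delta_mx !schur_delta -scalemxAl -scalemxAr mul_delta_mx !mxE !eqxx /=.
by rewrite !mulr1.
Qed.

Lemma transitive_schur_diag A :
  (forall i j k, A i k = A i j * A j k) ->
  (fun B => schur A B) <> (fun _ => 0) -> forall i, A i i = 1.
Proof.
move=> A_trans schur_neq0 i; have Aii2 : A i i = A i i * A i i by apply: A_trans.
have [Aii0|Aii_neq0] := eqVneq (A i i) 0.
  case: schur_neq0; apply: funext => B; apply/matrixP => k l; rewrite !mxE.
  by rewrite (A_trans k i l) (A_trans k i i) Aii0 !mulr0 !mul0r.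
by apply: (mulfI Aii_neq0); rewrite mulr1 -Aii2.
Qed.

Lemma orth_proj_scaleV (c : R[i]) P : c != 0 -> conjc c = c -> P *m P = c *: P ->
  orth_proj (c^-1 *: P) <-> adjmx P = P.
Proof.
move=> c_neq0 cJ PP; have cV_neq0 : c^-1 != 0 by rewrite invr_eq0.
have adjZ : adjmx (c^-1 *: P) = c^-1 *: adjmx P.
  by apply/matrixP => i j; rewrite !mxE rmorphM /= conjc_inv cJ.
rewrite /orth_proj adjZ -scalemxAl -scalemxAr PP !scalerA mulrAC mulVf // mul1r.
by split => [[_ /(scalerI cV_neq0)] | ->].
Qed.

End SchurMultiplier.

Section TransitiveSchur.
Context {R : realType} {n : nat}.
Variable A : 'M[R[i]]_n.+1.
Hypothesis A_trans : forall i j k, A i k = A i j * A j k.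
Hypothesis A_diag : forall i, A i i = 1.
Implicit Types (x : 'cV[R[i]]_n.+1) (B : 'M[R[i]]_n.+1).

Lemma mul_entry_swap i j : A i j * A j i = 1.
Proof. by rewrite -A_trans A_diag. Qed.

Lemma entry_neq0 i j : A i j != 0.
Proof.
by apply: contra_eq_neq (mul_entry_swap i j) => ->; rewrite mul0r eq_sym oner_neq0.
Qed.

Lemma adjmx_unimodularP : adjmx A = A <-> unimodular_mx A.
Proof.
split => [/matrixP adjA i j | uniA].
  have AJ : conjc (A i j) = A j i by move: (adjA j i); rewrite !mxE.
  have : (sqnormc (A i j))%:C%C = 1 by rewrite -mulcJ_sqnormc AJ mul_entry_swap.
  by case.
apply/matrixP => i j; rewrite !mxE; apply: (mulfI (entry_neq0 j i)).
by rewrite mulcJ_sqnormc uniA mul_entry_swap.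
Qed.

Lemma mulmx_AA : A *m A = n.+1%:R *: A.
Proof.
apply/matrixP => i k; rewrite !mxE; under eq_bigr do rewrite -A_trans.
by rewrite sumr_const card_ord mulr_natl.
Qed.

Lemma mulmx_A_col x i : (A *m x) i 0 = A i 0 * \sum_j A 0 j * x j 0.
Proof.
by rewrite mxE mulr_sumr; apply: eq_bigr => j _; rewrite (A_trans i 0 j) mulrA.
Qed.

Lemma sqvnorm_mulmx_A x :
  sqvnorm (A *m x) = (\sum_i sqnormc (A i 0)) * sqnormc (\sum_j A 0 j * x j 0).
Proof.
by rewrite /sqvnorm mulr_suml; apply: eq_bigr => i _; rewrite mulmx_A_col sqnormcM.
Qed.

Lemma sqfrobeniusE :
  sqfrobenius A = (\sum_i sqnormc (A i 0)) * \sum_j sqnormc (A 0 j).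
Proof.
rewrite /sqfrobenius mulr_suml; apply: eq_bigr => i _; rewrite mulr_sumr.
by apply: eq_bigr => j _; rewrite (A_trans i 0 j) sqnormcM.
Qed.

Lemma sqfrobenius_attained :
  exists2 x, sqvnorm x = 1 & sqvnorm (A *m x) = sqfrobenius A.
Proof.
pose s := \sum_j sqnormc (A 0 j).
have s_gt0 : 0 < s.
  rewrite /s (bigD1 0) //= A_diag sqnormc1 ltr_pwDl //.
  by rewrite sumr_ge0 // => j _; rewrite sqnormc_ge0.
pose x : 'cV[R[i]]_n.+1 := \col_j (conjc (A 0 j) * ((Num.sqrt s)^-1)%:C%C).
exists x.
  rewrite /sqvnorm; under eq_bigr do rewrite mxE sqnormcM sqnormcJ sqnormc_real.
  by rewrite -mulr_suml exprVn sqr_sqrtr ?ltW // mulfV ?gt_eqF.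
rewrite sqvnorm_mulmx_A sqfrobeniusE; congr (_ * _).
have -> : \sum_j A 0 j * x j 0 = (s * (Num.sqrt s)^-1)%:C%C.
  rewrite rmorphM /= rmorph_sum mulr_suml; apply: eq_bigr => j _.
  by rewrite mxE mulrA mulcJ_sqnormc.
by rewrite sqnormc_real exprMn exprVn sqr_sqrtr ?ltW // expr2 -mulrA mulfV ?mulr1 ?gt_eqF.
Qed.

Lemma sqfrobenius_le_unimodular :
  sqfrobenius A <= n.+1%:R ^+ 2 -> unimodular_mx A.
Proof.
move=> frob_le i j.
pose f (p : 'I_n.+1 * 'I_n.+1) := sqnormc (A p.1 p.2) + sqnormc (A p.2 p.1).
have sqnorm_swap i' j' : sqnormc (A i' j') * sqnormc (A j' i') = 1.
  by rewrite -sqnormcM mul_entry_swap sqnormc1.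
have f_ge2 p : 2 <= f p by apply: add_ge2_of_mul_eq1; rewrite ?sqnormc_ge0 ?sqnorm_swap.
have sum_f : \sum_p f p = sqfrobenius A + sqfrobenius A.
  rewrite -(pair_bigA _ (fun i' j' => sqnormc (A i' j') + sqnormc (A j' i'))) /=.
  under eq_bigr do rewrite big_split /=.
  by rewrite big_split /= [X in _ + X]exchange_big.
have sum_f_le : \sum_p f p <= #|{: 'I_n.+1 * 'I_n.+1}|%:R * 2.
  by rewrite sum_f card_prod card_ord natrM -expr2; lra.
have f_eq2 := eq_of_sum_le_card_mul f_ge2 sum_f_le (i, j).
exact: eq1_of_mul_eq1_add_eq2 (sqnorm_swap i j) f_eq2.
Qed.

Lemma opnorm_unimodularP : opnorm A = n.+1%:R <-> unimodular_mx A.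
Proof.
have [x x_eq1 Ax_frob] := sqfrobenius_attained.
split => [opA | uniA].
  apply: sqfrobenius_le_unimodular; rewrite -Ax_frob -sqrt_le_natr -vnormE -opA.
  by rewrite vnorm_mul_le_opnorm ?x_eq1 // opA pnatr_eq0.
have sum1 : \sum_(i < n.+1) (1 : R) = n.+1%:R by rewrite sumr_const card_ord.
apply: (opnorm_attained _ _ x); rewrite ?x_eq1 //.
  move=> y y_le1; rewrite vnormE sqrt_le_natr sqvnorm_mulmx_A.
  under eq_bigr do rewrite uniA; rewrite sum1 expr2 ler_wpM2l //.
  apply: (le_trans (sqnormc_sum_le _ _)); rewrite ler_piMr //.
  by under eq_bigr do rewrite sqnormcM uniA mul1r.
rewrite vnormE Ax_frob /sqfrobenius.
under eq_bigr do under eq_bigr do rewrite uniA.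
by rewrite sum1 sumr_const card_ord -[_ *+ n.+1]mulr_natr -expr2 sqrtr_sqr ger0_norm.
Qed.

Lemma schur_unimodular_diag B : unimodular_mx A ->
  schur A B = diag_mx (\row_i A i 0) *m B *m diag_mx (\row_i conjc (A i 0)).
Proof.
move=> /adjmx_unimodularP/matrixP adjA; apply/matrixP => i j.
have AJ : conjc (A j 0) = A 0 j by move: (adjA 0 j); rewrite !mxE.
by rewrite mul_mx_diag mul_diag_mx !mxE AJ (A_trans i 0 j) mulrAC.
Qed.

Lemma opnorm_schur_unimodular B : unimodular_mx A -> opnorm (schur A B) = opnorm B.
Proof.
move=> uniA; rewrite schur_unimodular_diag //.
apply: (opnorm_mulmx_isometry _ _ (diag_mx (\row_i A i 0))) => [x|x|].
- by apply: sqvnorm_diag_unimodular => i; rewrite mxE.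
- by apply: sqvnorm_diag_unimodular => i; rewrite mxE sqnormcJ.
rewrite mulmx_diag -diag_const_mx; congr diag_mx; apply/matrixP => i j.
by rewrite !mxE mulrC mulcJ_sqnormc uniA.
Qed.

Lemma schur_opnorm_unimodularP : schur_opnorm A = 1 <-> unimodular_mx A.
Proof.
have opnorm_delta i j : opnorm (delta_mx i j : 'M[R[i]]_n.+1) = 1.
  by rewrite -[delta_mx i j]scale1r opnorm_scale_delta sqnormc1 sqrtr1.
split => [schurA | uniA]; last first.
  apply: sup_eq_of_ubound => [|_ [B /= B_le1 <-]]; last first.
    by rewrite opnorm_schur_unimodular.
  by exists (delta_mx 0 0); rewrite ?opnorm_schur_unimodular //= opnorm_delta.
have sqnorm_le1 i j : sqnormc (A i j) <= 1.
  have : opnorm (schur A (delta_mx i j)) <= 1.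
    have schurA_neq0 : schur_opnorm A != 0 by rewrite schurA oner_neq0.
    rewrite -schurA; apply: le_sup_of_neq0 schurA_neq0 _.
    by exists (delta_mx i j); rewrite //= opnorm_delta.
  by rewrite schur_delta opnorm_scale_delta -[X in _ <= X -> _]sqrtr1 ler_sqrt.
move=> i j; apply/le_anti; rewrite sqnorm_le1 /=.
by rewrite -sqnormc1 -(mul_entry_swap i j) sqnormcM ler_piMr ?sqnormc_ge0.
Qed.

End TransitiveSchur.

Theorem proposition2p5 (R : realType) (n : nat) (A : 'M[R[i]]_n)
  (Hnz : (fun B : 'M[R[i]]_n => schur A B) <> (fun _ => 0))
  (Hmul : forall B C : 'M[R[i]]_n, schur A (B *m C) = schur A B *m schur A C) :
  [/\ ((forall B : 'M[R[i]]_n, schur A (adjmx B) = adjmx (schur A B)) <-> opnorm A = n%:R),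
      (opnorm A = n%:R <-> orth_proj ((n%:R)^-1 *: A)) &
      (orth_proj ((n%:R)^-1 *: A) <-> schur_opnorm A = 1)].
Proof.
case: n A Hnz Hmul => [|m] A Hnz Hmul.
  by case: Hnz; apply: funext => B; apply/matrixP => -[].
have A_trans := schur_mul_transitive A Hmul.
have A_diag := transitive_schur_diag A A_trans Hnz.
have adjmxP := schur_adjmxP A.
have hermP := adjmx_unimodularP A A_trans A_diag.
have opnormP := opnorm_unimodularP A A_trans A_diag.
have schur_opnormP := schur_opnorm_unimodularP A A_trans A_diag.
have projP : orth_proj (m.+1%:R^-1 *: A) <-> adjmx A = A.
  by apply: orth_proj_scaleV; rewrite ?pnatr_eq0 ?conjc_nat ?mulmx_AA.
by split; tauto.
Qed.
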